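(* Let $G$ be a finite group, $H$ a core-free subgroup of $G$, and $S$ a right transversal of $H$ in $G$ which generates $G$, is nilpotent with respect to its induced right loop structure, and has $|S|=p^n$ for some prime $p$ and $n\in\mathbb N$. Then both $H$ and $G$ are $p$-groups.
   Context: For $H\le G$, a right transversal $S$ contains exactly one element of each right coset $Hg$, with $1\in S$; its induced operation is $x\circ y=$ the unique element of $S\cap Hxy$, making $(S,\circ)$ a right loop (two-sided identity, each equation $X\circ a=b$ uniquely solvable). $H$ is core-free if $\bigcap_{g\in G}g^{-1}Hg=\{1\}$. A congruence on a right loop $S$ is an equivalence relation which is a right subloop of $S\times S$; an invariant right subloop is the class $T$ of $1$ under a congruence, $S/T=\{T\circ x\}$ with $(T\circ x)\circ(T\circ y)=T\circ(x\circ y)$. For congruences $\beta,\gamma$, $\gamma$ centralizes $\beta$ if there is a congruence $(\gamma|\beta)$ on the right loop $\beta\subseteq S\times S$ with: (i) $(x,y)(\gamma|\beta)(u,v)\Rightarrow x\gamma u$; (ii) for $(x,y)\in\beta$, $(u,v)\mapsto u$ is a bijection from the $(\gamma|\beta)$-class of $(x,y)$ to the $\gamma$-class of $x$; (iii) $(x,y)\in\gamma\Rightarrow(x,x)(\gamma|\beta)(y,y)$; (iv) $(x,y)(\gamma|\beta)(u,v)\Rightarrow(y,x)(\gamma|\beta)(v,u)$; (v) $(x,y)(\gamma|\beta)(u,v)$, $(y,z)(\gamma|\beta)(v,w)\Rightarrow(x,z)(\gamma|\beta)(u,w)$. The center $\mathcal Z(S)$ is the class of $1$ under the unique maximal congruence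 centralized by $S\times S$. $S$ is nilpotent if the series $\mathcal Z_0=\{1\}$, $\mathcal Z_1=\mathcal Z(S)$, $\mathcal Z_{i+1}/\mathcal Z_i=\mathcal Z(S/\mathcal Z_i)$ reaches $\mathcal Z_n=S$ for some $n$. *)

From HB Require Import structures.
From mathcomp Require Import all_boot all_order all_fingroup all_solvable.
Set Implicit Arguments. Unset Strict Implicit. Unset Printing Implicit Defensive.

(* Right loops (and their quotients) are represented this way; the right-loop
   axioms are not bundled since they are facts, not data. *)
Record magma1 := Magma1 {
  m_T : finType;
  m_op : m_T -> m_T -> m_T;
  m_one : m_T }.

Section RightLoops.
Variable L : magma1.
Local Notation T := (m_T L).
Local Notation op := (@m_op L).

Definition pop (p q : T * T) : T * T := (op p.1 q.1, op p.2 q.2).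

(* A congruence: an equivalence relation whose graph is a right subloop of
   S x S (contains (1,1) by reflexivity, closed under the product and under
   right division, i.e. solutions X of X o a = b with a, b in the graph). *)
Definition congruence (r : rel T) : Prop :=
  [/\ (forall x, r x x), (forall x y, r x y -> r y x),
      (forall x y z, r x y -> r y z -> r x z),
      (forall x y u v, r x u -> r y v -> r (op x y) (op u v)) &
      (forall a b c d x z, r a c -> r b d -> op x a = b -> op z c = d -> r x z)].

Definition centralizes (gam beta : rel T) : Prop :=
  exists R : rel (T * T),
    let inB := fun p : T * T => beta p.1 p.2 in
    [/\ (* R is a congruence on the right loop beta *)
        [/\ (forall p q, R p q -> inB p && inB q),
            (forall p, inB p -> R p p),
            (forall p q, R p q -> R q p),
            (forall p q s, R p q -> R q s -> R p s) &
            (forall p q p' q', R p q -> R p' q' -> R (pop p p') (pop q q'))],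
        (forall p q p' q' p'' q'', R p q -> R p' q' ->
                 pop p'' p = p' -> pop q'' q = q' -> R p'' q'') &
        [/\ (forall x y u v, R (x, y) (u, v) -> gam x u),
        (forall x y u, beta x y -> gam x u ->
                      exists! v, R (x, y) (u, v)),
        (forall x y, gam x y -> R (x, x) (y, y)),
        (forall x y u v, R (x, y) (u, v) -> R (y, x) (v, u)) &
        (forall x y z u v w,
                 R (x, y) (u, v) -> R (y, z) (v, w) -> R (x, z) (u, w))]].

Definition total_rel : rel T := fun _ _ => true.

(* z is the unique maximal congruence centralized by S x S (its class of 1 is
   the center). *)
Definition is_center_cong (z : rel T) : Prop :=
  [/\ congruence z, centralizes total_rel z &
      forall g, congruence g -> centralizes total_rel g ->
        forall x y, g x y -> z x y].

Definition cls (r : rel T) (x : T) : {set T} := [set y | r x y].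

Definition qpred (r : rel T) : pred {set T} :=
  fun C => [exists x, C == cls r x].

Definition qT (r : rel T) : finType :=
  Finite.clone {C : {set T} | qpred r C} _.

Lemma qcls_proof (r : rel T) (x : T) : qpred r (cls r x).
Proof. by apply/existsP; exists x. Qed.

Definition qcls (r : rel T) (x : T) : qT r := exist _ (cls r x) (qcls_proof r x).

Definition qrep (r : rel T) (C : qT r) : T :=
  odflt (@m_one L) [pick x | val C == cls r x].

Definition quot (r : rel T) : magma1 :=
  @Magma1 (qT r) (fun C D => qcls r (op (qrep C) (qrep D))) (qcls r (@m_one L)).

End RightLoops.

(* Nilpotency: the upper central series, written via the congruences th i
   whose classes of 1 are Z_i:  Z_0 = {1}, Z_{i+1}/Z_i = Z(S/Z_i), Z_n = S. *)
Definition nilpotent_loop (L : magma1) : Prop :=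
  exists (n : nat) (th : nat -> rel (m_T L)),
    [/\ (forall x y, th 0 x y = (x == y)),
        (forall x y, th n x y) &
        forall i, i < n ->
          congruence (th i) /\
          exists z : rel (m_T (quot (th i))),
            is_center_cong z /\
            forall x y, th i.+1 x y = z (qcls (th i) x) (qcls (th i) y)].

Section Transversal.
Variables (gT : finGroupType) (H : {group gT}) (S : {set gT}).
Hypothesis S1 : (1 \in S)%g.

Definition ST : finType := Finite.clone {x : gT | x \in S} _.

Definition tr_op (x y : ST) : ST :=
  odflt x [pick z : ST | val z \in (H :* (val x * val y))%g].

Definition tr_one : ST := exist _ 1%g S1.

Definition transversal_loop : magma1 := @Magma1 ST tr_op tr_one.
End Transversal.

From mathcomp Require Import all_boot all_order all_fingroup all_solvable.
Set Implicit Arguments. Unset Strict Implicit. Unset Printing Implicit Defensive.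

(* The group G acts on the right on the transversal S: x.g is the element of S
   in the coset Hxg, and the induced loop product is x o y = x.y.  Let
   th_0 <= ... <= th_m be the upper central series of congruences of S.
   Key step: if g moves every x inside its th_(i+1)-class, then g^|S| moves
   every x inside its th_i-class.  In the quotient Q = S/th_i the centre
   congruence z is centralized by Q x Q through a relation R, and the action
   of G preserves R (generators from S act by right translations, and the
   property is closed under products).  Hence on classes g acts along the
   "transport" map u |-> v, R(a,b)(u,v), of the pair (a,b) = (x, x.g); a
   power of a transport map fixing one point fixes all points, so its order
   divides |Q|, which divides |S|.  Descending the series, g^(|S|^m) acts
   trivially, so it lies in the core of H, which is trivial.  Thus the
   exponent of G divides |S|^m = p^(nm): G, and with it H, is a p-group. *)

(* A permutation some power of which fixes a point only if it fixes every
   point generates a semiregular group, so its order divides #|T|. *)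
Lemma iter_semiregular (T : finType) (f : T -> T) (k : nat) :
  injective f -> (forall j x, iter j f x = x -> forall y, iter j f y = y) ->
  #|T| %| k -> forall x, iter k f x = x.
Proof.
move=> f_inj fix_all dTk x.
pose s := perm f_inj.
have sX j u : (s ^+ j)%g u = iter j f u.
  by rewrite permX; elim: j => //= j ->; rewrite permE.
suff: #[s]%g %| k by rewrite order_dvdn => /eqP e; rewrite -sX e perm1.
apply: dvdn_trans dTk.
have acts : [acts <[s]>%g, on [set: T] | 'P].
  by apply/subsetP => y _; rewrite !inE; apply/subsetP => w; rewrite !inE.
have Pt := orbit_partition acts.
rewrite -cardsT (card_uniform_partition (n := #[s]%g) _ Pt) ?dvdn_mull //.
move=> B /imsetP [u _ ->]; have := card_orbit_stab 'P <[s]>%g u.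
suff ->: ('C_(<[s]>)[u | 'P])%g = 1%g by rewrite cards1 muln1.
apply/trivgP/subsetP => t; rewrite inE => /andP [/cycleP [j ->] /astab1P ej].
rewrite inE; apply/eqP/permP => v; rewrite perm1 sX (fix_all j u) //.
by rewrite -sX; exact: ej.
Qed.

Definition right_loop (L : magma1) : Prop :=
  [/\ (forall x, @m_op L (@m_one L) x = x), (forall x, @m_op L x (@m_one L) = x),
      (forall a b, exists y, @m_op L y a = b) &
      (forall y y' a, @m_op L y a = @m_op L y' a -> y = y')].

(* The relation R witnessing that gam centralizes beta: centralizes gam beta
   unfolds to exists R, centralizing_rel gam beta R.  Naming it lets the
   axioms of R be used as section hypotheses below. *)
Definition centralizing_rel (L : magma1) (gam beta : rel (m_T L))
    (R : rel (m_T L * m_T L)) : Prop :=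
  [/\ [/\ (forall p q, R p q -> beta p.1 p.2 && beta q.1 q.2),
          (forall p, beta p.1 p.2 -> R p p),
          (forall p q, R p q -> R q p),
          (forall p q s, R p q -> R q s -> R p s) &
          (forall p q p' q', R p q -> R p' q' -> R (pop p p') (pop q q'))],
      (forall p q p' q' p'' q'', R p q -> R p' q' ->
         pop p'' p = p' -> pop q'' q = q' -> R p'' q'') &
      [/\ (forall x y u v, R (x, y) (u, v) -> gam x u),
          (forall x y u, beta x y -> gam x u -> exists! v, R (x, y) (u, v)),
          (forall x y, gam x y -> R (x, x) (y, y)),
          (forall x y u v, R (x, y) (u, v) -> R (y, x) (v, u)) &
          (forall x y z u v w,
             R (x, y) (u, v) -> R (y, z) (v, w) -> R (x, z) (u, w))]].

Section RightLoop.
Variable L : magma1.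
Local Notation T := (m_T L).
Local Notation op := (@m_op L).
Local Notation one := (@m_one L).
Hypothesis hL : right_loop L.

Section Quotient.
Variable r : rel T.
Hypothesis cr : congruence r.

(* All classes of a congruence are right translates of the class of 1. *)
Lemma card_cls a : #|cls r a| = #|cls r one|.
Proof.
case: hL => [o1x _ rdiv rcan]; case: cr => [rr rs _ rop rd].
have ->: cls r a = (fun y => op y a) @: cls r one.
  apply/setP => w; apply/idP/imsetP.
    rewrite inE => raw; have [y hy] := rdiv a w.
    exists y => //; rewrite inE; apply: (rs _ _).
    by apply: (rd a w a a y one) => //; apply: rs.
  by case=> y; rewrite !inE => r1y ->; rewrite -{1}(o1x a); apply: rop.
by rewrite card_imset // => y y'; apply: rcan.
Qed.

Lemma qcls_eq x y : (qcls r x == qcls r y) = r x y.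
Proof.
case: cr => [rr rs rt _ _]; apply/eqP/idP.
  move=> e; have: y \in cls r y by rewrite inE.
  by rewrite -[cls r y]/(val (qcls r y)) -e inE.
move=> rxy; apply: val_inj; apply/setP => w; rewrite !inE.
by apply/idP/idP; [apply: rt (rs _ _ rxy) | apply: rt].
Qed.

Lemma qrepP x : r x (qrep (qcls r x)).
Proof.
case: cr => [rr _ _ _ _]; rewrite /qrep; case: pickP => [y /eqP e|].
  have: y \in cls r y by rewrite inE.
  by rewrite -e inE.
by move/(_ x); rewrite eqxx.
Qed.

Lemma qsurj (C : m_T (quot r)) : exists x, C = qcls r x.
Proof.
exists (qrep C); have /existsP [x0 /eqP e0] := valP C.
apply: val_inj => /=; rewrite /qrep; case: pickP => [y /eqP -> //|].
by move/(_ x0); rewrite /= e0 eqxx.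
Qed.

Lemma qop x y : @m_op (quot r) (qcls r x) (qcls r y) = qcls r (op x y).
Proof.
case: cr => [_ rs _ rop _]; apply/eqP; rewrite qcls_eq /=.
by apply: rop; apply: rs; apply: qrepP.
Qed.

Lemma right_loop_quot : right_loop (quot r).
Proof.
case: hL => [o1x ox1 rdiv _]; case: cr => [rr _ _ _ rd]; split.
- by move=> C; have [x ->] := qsurj C; rewrite [m_one _]/= qop o1x.
- by move=> C; have [x ->] := qsurj C; rewrite [m_one _]/= qop ox1.
- move=> A B; have [a ->] := qsurj A; have [b ->] := qsurj B.
  by have [y hy] := rdiv a b; exists (qcls r y); rewrite qop hy.
- move=> Y Y' A; have [y ->] := qsurj Y; have [y' ->] := qsurj Y'.
  have [a ->] := qsurj A; rewrite !qop => /eqP; rewrite !qcls_eq => h.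
  by apply/eqP; rewrite qcls_eq; apply: (rd a (op y a) a (op y' a)).
Qed.

(* Lagrange for right loops: the classes partition T into blocks of equal
   size, so the order of a quotient divides the order of the loop. *)
Lemma card_quot_dvd : #|m_T (quot r)| %| #|T|.
Proof.
case: cr => [rr rs rt _ _].
have eqr : {in [set: T] & &, equivalence_rel r}.
  move=> x y z _ _ _; split=> [|rxy]; first exact: rr.
  by apply/idP/idP; [apply: rt (rs _ _ rxy) | apply: rt].
have Pr := equivalence_partitionP eqr.
rewrite -[X in _ %| X]cardsT.
rewrite (card_uniform_partition (n := #|cls r one|) _ Pr); last first.
  move=> B /imsetP [x _ ->]; rewrite -(card_cls x).
  by apply: eq_card => y; rewrite !inE.
apply: dvdn_mulr; rewrite /= card_sig.
suff ->: #|[pred C | qpred r C]| = #|equivalence_partition r [set: T]| by [].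
apply: eq_card => C; rewrite inE /qpred; apply/existsP/imsetP => [[x /eqP ->]|[x _ ->]].
  by exists x => //; apply/setP => y; rewrite !inE.
by exists x; apply/eqP/setP => y; rewrite !inE.
Qed.
End Quotient.

Section Centralizing.
Variables (z : rel T) (R : rel (T * T)).
Hypotheses (cz : congruence z) (hR : centralizing_rel (@total_rel L) z R).

Lemma R_in p q : R p q -> z p.1 p.2 && z q.1 q.2.
Proof. by case: hR => [[h _ _ _ _] _ _]; apply: h. Qed.

Lemma R_refl p : z p.1 p.2 -> R p p.
Proof. by case: hR => [[_ h _ _ _] _ _]; apply: h. Qed.

Lemma R_sym p q : R p q -> R q p.
Proof. by case: hR => [[_ _ h _ _] _ _]; apply: h. Qed.

Lemma R_trans p q s : R p q -> R q s -> R p s.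
Proof. by case: hR => [[_ _ _ h _] _ _]; apply: h. Qed.

Lemma R_op p q p' q' : R p q -> R p' q' -> R (pop p p') (pop q q').
Proof. by case: hR => [[_ _ _ _ h] _ _]; apply: h. Qed.

Lemma R_div p q p' q' p'' q'' : R p q -> R p' q' ->
  pop p'' p = p' -> pop q'' q = q' -> R p'' q''.
Proof. by case: hR => _ h _; apply: h. Qed.

Lemma R_unique_ex x y u : z x y -> exists! v, R (x, y) (u, v).
Proof. by case: hR => _ _ [_ h _ _ _] zxy; apply: h. Qed.

Lemma R_diag x y : R (x, x) (y, y).
Proof. by case: hR => _ _ [_ _ h _ _]; apply: h. Qed.

Lemma R_swap x y u v : R (x, y) (u, v) -> R (y, x) (v, u).
Proof. by case: hR => _ _ [_ _ _ h _]; apply: h. Qed.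

Lemma R_comp x y w u v t : R (x, y) (u, v) -> R (y, w) (v, t) -> R (x, w) (u, t).
Proof. by case: hR => _ _ [_ _ _ _ h]; apply: h. Qed.

Lemma R_translate x y s : z x y -> R (x, y) (op x s, op y s).
Proof.
case: hL => [_ ox1 _ _] zxy.
by have := R_op (R_refl (p := (x, y)) zxy) (R_diag one s); rewrite /pop /= !ox1.
Qed.

Lemma R_functional a b u v v' : R (a, b) (u, v) -> R (a, b) (u, v') -> v = v'.
Proof.
move=> h1 h2; have /andP [zab _] := R_in h1.
by have [w [_ uw]] := R_unique_ex u zab; rewrite -(uw _ h1) -(uw _ h2).
Qed.

(* Parallelogram rule: from x z u and R(x,y)(u,v) we get R(x,u)(y,v), so the
   transport along (x,u) sends y to v. *)
Lemma R_exchange x y u v : z x u -> R (x, y) (u, v) -> R (x, u) (y, v).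
Proof.
case: hL => [o1x _ rdiv _]; case: cz => [_ zs zt _ _] zxu h.
have /andP [/= zxy _] := R_in h.
have [d hd] := rdiv y x; have [e he] := rdiv u v.
have h1 : R (d, one) (one, e).
  by apply: (R_div (R_diag y u) h); rewrite /pop /= ?hd ?he ?o1x.
have := R_op h1 (R_refl (p := (y, u)) (zt _ _ _ (zs _ _ zxy) zxu)).
by rewrite /pop /= hd he !o1x.
Qed.

Section Transport.
Variables (a b : T).
Hypothesis zab : z a b.

Definition transport (u : T) : T := odflt u [pick v | R (a, b) (u, v)].

Lemma transportP u : R (a, b) (u, transport u).
Proof.
rewrite /transport; case: pickP => [v //|].
by have [v [hv _]] := R_unique_ex u zab; move/(_ v); rewrite hv.
Qed.

Lemma transport_eq u v : R (a, b) (u, v) -> transport u = v.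
Proof. exact: R_functional (transportP u). Qed.

Lemma R_transport u w : R (u, transport u) (w, transport w).
Proof. exact: R_trans (R_sym (transportP u)) (transportP w). Qed.

Lemma transport_inj : injective transport.
Proof.
move=> u w e; have h := R_swap (R_transport u w); rewrite e in h.
have /andP [zv _] := R_in h.
by rewrite (R_functional h (R_refl (p := (transport w, u)) zv)).
Qed.

Lemma iter_transport_fix j u : iter j transport u = u ->
  forall w, iter j transport w = w.
Proof.
have Rj w : R (u, iter j transport u) (w, iter j transport w).
  by elim: j => [|j IH] /=; [exact: R_diag | exact: R_comp IH (R_transport _ _)].
move=> e w; apply: R_functional (R_diag u w).
by have := Rj w; rewrite e.
Qed.

Lemma iter_transport_id k : #|T| %| k -> forall u, iter k transport u = u.
Proof. exact: iter_semiregular transport_inj iter_transport_fix. Qed.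
End Transport.
End Centralizing.
End RightLoop.

Section Transversal.
Variables (gT : finGroupType) (G H : {group gT}) (S : {set gT}).
Hypothesis tS : is_transversal S (rcosets H G) G.
Local Notation U := (ST S).

Definition tact (x : U) (g : gT) : U :=
  odflt x [pick y : U | val y \in (H :* (val x * g))%g].

Lemma tr_valG (x : U) : (val x \in G)%g.
Proof. by case/and3P: tS => _ /subsetP SG _; apply: SG (valP x). Qed.

Lemma tr_meet_coset g : (g \in G)%g -> #|S :&: (H :* g)%g| = 1.
Proof.
case/and3P: tS => _ _ /forall_inP h gG; apply/eqP; apply: h.
by rewrite mem_rcosets -[g]mul1g mem_mulg.
Qed.

Lemma tr_rep g : (g \in G)%g -> exists y : U, (val y \in H :* g)%g.
Proof.
move/tr_meet_coset/eqP/cards1P => [y hy].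
have : y \in S :&: (H :* g)%g by rewrite hy set11.
by rewrite inE => /andP [yS yH]; exists (exist _ y yS : U).
Qed.

Lemma tr_rep_uniq (y1 y2 : U) : (val y2 \in H :* val y1)%g -> y1 = y2.
Proof.
move=> h; apply: val_inj.
have /eqP/cards1P [y hy] := tr_meet_coset (tr_valG y1).
have h1 : val y1 \in S :&: (H :* val y1)%g by rewrite inE (valP y1) rcoset_refl.
have h2 : val y2 \in S :&: (H :* val y1)%g by rewrite inE (valP y2) h.
by move: h1 h2; rewrite hy !inE => /eqP -> /eqP ->.
Qed.

Lemma tact_coset x g : (g \in G)%g -> (H :* val (tact x g) = H :* (val x * g))%g.
Proof.
move=> gG; apply/rcoset_eqP; rewrite /tact; case: pickP => [y //|].
have [y hy] := tr_rep (groupM (tr_valG x) gG).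
by move/(_ y); rewrite hy.
Qed.

Lemma tact_eq x g y : (g \in G)%g -> (H :* val y = H :* (val x * g))%g ->
  tact x g = y.
Proof.
by move=> gG e; apply: tr_rep_uniq; rewrite tact_coset // -e rcoset_refl.
Qed.

Lemma tact1 x : tact x 1%g = x.
Proof. by apply: tact_eq => //; rewrite mulg1. Qed.

Lemma tactM x g h : (g \in G)%g -> (h \in G)%g ->
  tact (tact x g) h = tact x (g * h)%g.
Proof.
move=> gG hG; apply/esym/(tact_eq (groupM gG hG)).
by rewrite tact_coset // rcosetM tact_coset // -rcosetM mulgA.
Qed.

Lemma tact_kernel_core g : (g \in G)%g -> (forall x, tact x g = x) ->
  (g \in gcore H G)%g.
Proof.
move=> gG h; apply/bigcapP => y yG; rewrite mem_conjg.
have [x hx] := tr_rep yG.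
have e : (H :* y = H :* val x)%g by apply/esym/rcoset_eqP.
have e2 : (H :* (y * g) = H :* y)%g.
  by rewrite rcosetM e -rcosetM -tact_coset // h.
have : (y * g \in H :* y)%g by rewrite -e2 rcoset_refl.
by rewrite mem_rcoset conjgE invgK mulgA.
Qed.

Variable S1 : (1 \in S)%g.
Local Notation L := (transversal_loop H S1).

Lemma right_loop_transversal : right_loop L.
Proof.
rewrite /right_loop /=; split.
- by move=> x; apply: tact_eq; rewrite ?tr_valG // mul1g.
- exact: tact1.
- move=> a b; exists (tact b (val a)^-1)%g.
  by rewrite [tr_op _ _ _]tactM ?groupV ?tr_valG // mulVg tact1.
- move=> y y' a e; change (tact y (val a) = tact y' (val a)) in e.
  rewrite -(tact1 y) -(tact1 y') -(mulgV (val a)).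
  by rewrite -!tactM ?groupV ?tr_valG // e.
Qed.

Hypothesis SgenG : (<<S>> = G)%g.

Lemma generated_translates (Z : rel U) (E : rel (U * U)) :
  (forall x y, Z x y -> E (x, y) (x, y)) ->
  (forall p q s, E p q -> E q s -> E p s) ->
  (forall p q, E p q -> Z q.1 q.2) ->
  (forall s x y, (s \in S)%g -> Z x y -> E (x, y) (tact x s, tact y s)) ->
  forall g x y, (g \in G)%g -> Z x y -> E (x, y) (tact x g, tact y g).
Proof.
move=> Erefl Etr EZ ES.
pose A := [set g in G | [forall x, forall y,
            Z x y ==> E (x, y) (tact x g, tact y g)]]%g.
have gA : group_set A.
  apply/group_setP; split.
    rewrite inE group1; apply/forallP => x; apply/forallP => y.
    by apply/implyP; rewrite !tact1; apply: Erefl.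
  move=> g1 g2; rewrite !inE => /andP [g1G /forallP h1] /andP [g2G /forallP h2].
  rewrite groupM //; apply/forallP => x; apply/forallP => y; apply/implyP => zxy.
  have /implyP/(_ zxy) E1 := forallP (h1 x) y.
  have /implyP/(_ (EZ _ _ E1)) E2 := forallP (h2 (tact x g1)) (tact y g1).
  by rewrite -!tactM //; apply: Etr E1 E2.
have GA : (G \subset A)%g.
  rewrite -SgenG -[A]/(gval (Group gA)) gen_subG; apply/subsetP => s sS.
  rewrite inE -SgenG (subsetP (subset_gen S)) //=.
  by apply/forallP => x; apply/forallP => y; apply/implyP; apply: ES.
move=> g x y /(subsetP GA); rewrite inE => /andP [_ /forallP /(_ x) /forallP /(_ y)].
by move/implyP.
Qed.

Lemma central_step (r : rel (m_T L)) (z : rel (m_T (quot r))) (k : nat) g :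
  congruence r -> is_center_cong z -> #|S| %| k -> (g \in G)%g ->
  (forall x, z (qcls r x) (qcls r (tact x g))) ->
  forall x, r x (tact x (g ^+ k))%g.
Proof.
move=> cr [cz [R hR] _] dSk gG hg x0.
have {}hR : centralizing_rel (@total_rel _) z R := hR.
have hQ := right_loop_quot right_loop_transversal cr.
pose q := qcls r.
have Rg h x y : (h \in G)%g -> z (q x) (q y) ->
    R (q x, q y) (q (tact x h), q (tact y h)).
  apply: (generated_translates (Z := fun x y => z (q x) (q y))
            (E := fun p p' => R (q p.1, q p.2) (q p'.1, q p'.2))).
  - by move=> x' y' /= zxy; exact: (R_refl (p := (q x', q y')) hR zxy).
  - by move=> p p' p'' /=; apply: (R_trans hR).
  - by move=> p p' /= /(R_in hR) /andP [].
  - move=> s x' y' sS /=; rewrite -[tact x' s]/(@m_op L x' (exist _ s sS)).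
    rewrite -[tact y' s]/(@m_op L y' (exist _ s sS)) /q -!(qop cr).
    exact: (R_translate hQ hR).
set a := q x0; set b := q (tact x0 g).
have zab : z a b by apply: hg.
case: (cz) => [_ _ zt _ _].
have orbit_g j : z a (q (tact x0 (g ^+ j))) /\
                 q (tact x0 (g ^+ j)) = iter j (transport R a b) a.
  elim: j => [|j [zay ey]]; first by rewrite expg0 tact1; case: cz.
  rewrite expgSr -tactM ?groupX //; set y := tact x0 (g ^+ j).
  have Rab := R_exchange hQ cz hR zab (Rg g x0 y gG zay).
  split; first exact: zt zay (hg y).
  by rewrite /= -ey (transport_eq hR zab Rab).
have dQk : #|m_T (quot r)| %| k.
  by apply: dvdn_trans (card_quot_dvd right_loop_transversal cr) _; rewrite card_sig.
have [_ e] := orbit_g k; rewrite -(qcls_eq cr) eq_sym; apply/eqP.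
by rewrite -/(q _) e (iter_transport_id hR zab dQk).
Qed.

Lemma nilpotent_power_acts_trivially :
  nilpotent_loop L -> exists m, forall g, (g \in G)%g ->
    forall x, tact x (g ^+ (#|S| ^ m))%g = x.
Proof.
case=> m [th [th0 thm thS]]; exists m.
suff descend j : j <= m -> forall g, (g \in G)%g ->
    (forall x, th j x (tact x g)) -> forall x, tact x (g ^+ (#|S| ^ j))%g = x.
  by move=> g gG; apply: descend => // x; apply: thm.
elim: j => [|j IH] ltjm g gG hg x.
  by rewrite expn0 expg1; move: (hg x); rewrite th0 => /eqP.
have [cj [z [cz thz]]] := thS j ltjm.
have hz y : z (qcls (th j) y) (qcls (th j) (tact y g)) by rewrite -thz.
have gk := central_step cj cz (dvdnn #|S|) gG hz.
by rewrite expnS expgM; apply: IH (ltnW ltjm) _ (groupX _ gG) gk x.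
Qed.
End Transversal.

Theorem mainTheorem17 (gT : finGroupType) (G H : {group gT}) (S : {set gT})
  (S1 : (1 \in S)%g) (p n : nat) :
  (H \subset G)%g ->
  gcore H G = 1%g ->
  is_transversal S (rcosets H G) G ->
  <<S>>%g = G ->
  nilpotent_loop (transversal_loop H S1) ->
  prime p -> #|S| = p ^ n ->
  (p.-group H)%g /\ (p.-group G)%g.
Proof.
move=> HG core1 tS SgenG nilS pp cardS.
have [m trivial] := nilpotent_power_acts_trivially tS SgenG nilS.
have expG : exponent G %| #|S| ^ m.
  apply/exponentP => g gG; apply/set1gP; rewrite -core1.
  by apply: (tact_kernel_core tS _ (trivial g gG)); rewrite groupX.
have pG : (p.-group G)%g.
  by rewrite -pnat_exponent (pnat_dvd expG) // cardS -expnM pnatX pnat_id.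
by split; first exact: pgroupS HG pG.
Qed.
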